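(* Let $k$ be a positive integer and $\mathbb{A}$ an alphabet with exactly $k$ letters. The number of extremal $XY_1XY_2X$-avoiding words over $\mathbb{A}$ is $\frac{(2k)!}{2^k}$.
   Context: A word is a finite sequence of letters. A factor of $W$ is a word $U$ with $W=W_1UW_2$ for some (possibly empty) words $W_1,W_2$. A word $W$ contains the pattern $XY_1XY_2X$ if some factor of $W$ can be written as $AB_1AB_2A$ with $A,B_1,B_2$ nonempty words (not necessarily distinct from one another); otherwise $W$ avoids $XY_1XY_2X$. An extension of a word $W$ over $\mathbb{A}$ is any word $W_1xW_2$ with $W=W_1W_2$ ($W_1,W_2$ possibly empty) and $x\in\mathbb{A}$. A word over $\mathbb{A}$ is extremal $XY_1XY_2X$-avoiding if it avoids $XY_1XY_2X$ and every extension of it contains $XY_1XY_2X$. *)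

From mathcomp Require Import all_boot.
Set Implicit Arguments. Unset Strict Implicit. Unset Printing Implicit Defensive.

Definition contains_XYXYX {A : Type} (W : seq A) : Prop :=
  exists (W1 W2 a b1 b2 : seq A),
    [/\ a <> [::], b1 <> [::], b2 <> [::] &
        W = W1 ++ (a ++ b1 ++ a ++ b2 ++ a) ++ W2].

Definition avoids_XYXYX {A : Type} (W : seq A) : Prop := ~ contains_XYXYX W.

Definition is_extension {A : Type} (W V : seq A) : Prop :=
  exists (W1 W2 : seq A) (x : A), W = W1 ++ W2 /\ V = W1 ++ x :: W2.

Definition extremal_XYXYX {A : Type} (W : seq A) : Prop :=
  avoids_XYXYX W /\ forall V : seq A, is_extension W V -> contains_XYXYX V.

From mathcomp Require Import all_boot zify.
Set Implicit Arguments. Unset Strict Implicit. Unset Printing Implicit Defensive.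

(* Shrinking X to its first letter, a word contains XY1XY2X iff some letter
   occurs at positions i < j < l with j - i >= 2 and l - j >= 2.  Doubling
   every letter of a word u in which each letter occurs exactly twice gives a
   word where each letter fills two adjacent pairs of positions: no such triple
   exists, but any insertion either adds a fifth copy of a letter or splits one
   of the pairs, and both create one.  Conversely, in an extremal word,
   inserting a copy of a letter next to one of its occurrences must create a
   triple of that very letter; this pins its positions down to
   {m, m+1, M-1, M} with M >= m+3, and a parity induction shows that all pairs
   start at even positions, so the word is such a doubling.  The words u are
   the arrangements of a multiset with k letters of multiplicity 2, counted by
   (2k)!/2^k. *)

Definition spaced_triple (P : pred nat) : Prop :=
  exists i j l, [/\ i.+1 < j, j.+1 < l, P i, P j & P l].

Lemma eq_spaced_triple (P Q : pred nat) : P =1 Q -> spaced_triple P -> spaced_triple Q.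
Proof. by move=> eqPQ [i [j [l [? ? Pi Pj Pl]]]]; exists i, j, l; rewrite -!eqPQ. Qed.

Lemma two_pairs_no_spaced_triple (P : pred nat) a b :
  (forall q, P q -> q = a \/ q = a.+1 \/ q = b \/ q = b.+1) -> ~ spaced_triple P.
Proof. by move=> sub [i [j [l [ij jl /sub Pi /sub Pj /sub Pl]]]]; lia. Qed.

(* The occurrence positions of a letter after inserting a letter at [g], when
   [P] held them before; [b] tells whether the inserted letter is that letter. *)
Definition ins_pred (g : nat) (b : bool) (P : pred nat) : pred nat :=
  fun q => if q < g then P q else if q == g then b else P q.-1.

Lemma ins_predP g b (P : pred nat) q :
  ins_pred g b P q -> [\/ q < g /\ P q, q = g /\ b | g < q /\ P q.-1].
Proof.
rewrite /ins_pred; case: ltngtP => [lt_qg | gt_qg | ->] Pq.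
- by apply: Or31.
- by apply: Or33.
- by apply: Or32.
Qed.

Lemma spaced_triple_ins_pred_false g (P : pred nat) :
  ~ spaced_triple P -> spaced_triple (ins_pred g false P) -> [/\ 0 < g, P g.-1 & P g].
Proof.
move=> free_P [i [j [l [ij jl]]]].
have back q : ins_pred g false P q ->
    exists2 q', P q' & (q < g /\ q' = q) \/ (g < q /\ q' = q.-1).
  by case/ins_predP=> [[? Pq] | [_ //] | [? Pq]]; [exists q => //; left | exists q.-1 => //; right].
move=> /back[i' Pi' ei] /back[j' Pj' ej] /back[l' Pl' el].
have [/andP[ij' jl'] | tight] := boolP ((i'.+1 < j') && (j'.+1 < l')).
  by case: free_P; exists i', j', l'.
have [[gi gj] | [gj gl]] : (i' = g.-1 /\ j' = g) \/ (j' = g.-1 /\ l' = g) by lia.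
  by split; [lia | rewrite -gi | rewrite -gj].
by split; [lia | rewrite -gj | rewrite -gl].
Qed.

Section InsPredEval.
Variables (g : nat) (b : bool) (P : pred nat).

Lemma ins_pred_lt q : q < g -> ins_pred g b P q = P q.
Proof. by rewrite /ins_pred => ->. Qed.

Lemma ins_pred_at : ins_pred g b P g = b.
Proof. by rewrite /ins_pred ltnn eqxx. Qed.

Lemma ins_pred_gt q : g < q -> ins_pred g b P q = P q.-1.
Proof. by rewrite /ins_pred => gq; rewrite ltnNge ltnW // gtn_eqF. Qed.

End InsPredEval.

Lemma spaced_triple_ins_pred_pairs g (b : bool) (P : pred nat) p1 p2 :
  P p1 -> P p1.+1 -> P p2 -> P p2.+1 -> p1.+1 < p2 ->
  [\/ b, g = p1.+1 | g = p2.+1] -> spaced_triple (ins_pred g b P).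
Proof.
move=> P1 P1' P2 P2' p12 new_or_split.
have [g_p1 | p1_g] := leqP g p1.
  have {new_or_split} new : b by case: new_or_split => //; lia.
  exists g, p1.+2, p2.+2; split; try lia.
  - by rewrite ins_pred_at.
  - by rewrite ins_pred_gt //; lia.
  - by rewrite ins_pred_gt //; lia.
have [g_p2 | p2_g] := leqP g p2.
  have [-> | g_p1'] := eqVneq g p1.+1.
    exists p1, p1.+2, p2.+2; split; try lia.
    - by rewrite ins_pred_lt.
    - by rewrite ins_pred_gt.
    - by rewrite ins_pred_gt //; lia.
  have {new_or_split} new : b by case: new_or_split => //; lia.
  exists p1, g, p2.+2; split; try lia.
  - by rewrite ins_pred_lt.
  - by rewrite ins_pred_at.
  - by rewrite ins_pred_gt //; lia.
have [-> | g_p2'] := eqVneq g p2.+1.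
  exists p1, p2, p2.+2; split; try lia.
  - by rewrite ins_pred_lt //; lia.
  - by rewrite ins_pred_lt.
  - by rewrite ins_pred_gt.
have {new_or_split} new : b by case: new_or_split => //; lia.
exists p1, p2, g; split; try lia.
- by rewrite ins_pred_lt //; lia.
- by rewrite ins_pred_lt.
- by rewrite ins_pred_at.
Qed.

Section ExtremalPositions.

Variables (n : nat) (P : pred nat).
Hypothesis P_bounded : forall p, P p -> p < n.
Hypothesis P_free : ~ spaced_triple P.
Hypothesis P_insertion : forall g, g <= n -> (0 < g /\ P g.-1) \/ P g ->
  spaced_triple (ins_pred g true P).

Variables (m M : nat).
Hypotheses (Pm : P m) (PM : P M).
Hypotheses (min_m : forall p, P p -> m <= p) (max_M : forall p, P p -> p <= M).

Lemma extremal_positions_range p : P p -> m <= p <= M /\ (p <= m.+1 \/ M.-1 <= p).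
Proof.
move=> Pp; split; first by rewrite min_m ?max_M.
have [|] := leqP p m.+1; first by left.
have [|] := leqP M.-1 p; first by right.
by move=> lt_pM lt_mp; case: P_free; exists m, p, M; split => //; lia.
Qed.

(* Each of the next three claims inserts one more copy next to [m] or [M]: were
   the claim false, the enlarged set would still lie in two adjacent pairs. *)
Lemma extremal_positions_succ_min : P m.+1.
Proof.
apply/negPn/negP => notPm1.
have lt_mn : m < n := P_bounded Pm.
have triple := P_insertion lt_mn (or_introl (conj (ltn0Sn m) Pm)).
apply: (two_pairs_no_spaced_triple (a := m) (b := M)) triple => q.
case/ins_predP=> [[lt_q /extremal_positions_range] | [-> _] | [gt_q Pq]]; try lia.
have : q.-1 != m.+1 by apply: contraNneq notPm1 => <-.
have := extremal_positions_range Pq; lia.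
Qed.

Lemma extremal_positions_pred_max : P M.-1.
Proof.
apply/negPn/negP => notPM1.
have le_Mn : M <= n := ltnW (P_bounded PM).
apply: (two_pairs_no_spaced_triple (a := m) (b := M)) (P_insertion le_Mn (or_intror PM)) => q.
case/ins_predP=> [[lt_q Pq] | [-> _] | [gt_q /extremal_positions_range]]; try lia.
have : q != M.-1 by apply: contraNneq notPM1 => <-.
have := extremal_positions_range Pq; lia.
Qed.

Lemma extremal_positions_gap : m.+2 < M.
Proof.
rewrite ltnNge; apply/negP => le_M_m2.
have lt_Mn : M < n := P_bounded PM.
have triple := P_insertion lt_Mn (or_introl (conj (ltn0Sn M) PM)).
apply: (two_pairs_no_spaced_triple (a := m) (b := m.+2)) triple => q.
have le_mM := max_M Pm.
by case/ins_predP=> [[_ /extremal_positions_range] | [-> _] | [_ /extremal_positions_range]]; lia.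
Qed.

End ExtremalPositions.

Lemma extremal_positions n (P : pred nat) :
  (forall p, P p -> p < n) -> ~ spaced_triple P ->
  (forall g, g <= n -> (0 < g /\ P g.-1) \/ P g -> spaced_triple (ins_pred g true P)) ->
  (exists p, P p) ->
  exists m M, m.+2 < M /\ forall p, P p = (p \in [:: m; m.+1; M.-1; M]).
Proof.
move=> bounded free insertion exP.
have [m Pm min_m] := ex_minnP exP.
have [M PM max_M] := ex_maxnP exP (fun p Pp => ltnW (bounded p Pp)).
have gap := extremal_positions_gap bounded free insertion Pm PM min_m max_M.
have Pm1 := extremal_positions_succ_min bounded free insertion Pm PM min_m max_M.
have PM1 := extremal_positions_pred_max bounded free insertion Pm PM min_m max_M.
exists m, M; split=> // p; rewrite !inE; apply/idP/idP; last by case/or4P=> /eqP ->.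
by move/(extremal_positions_range free Pm PM min_m max_M); lia.
Qed.

Section Occurrences.

Variable T : eqType.
Implicit Types (c x : T) (W u : seq T).

Definition occurs c W : pred nat := fun p => (p < size W) && (nth c W p == c).

Lemma occurs_nth x0 c W p : occurs c W p -> nth x0 W p = c.
Proof. by case/andP=> lt_pW /eqP <-; apply: set_nth_default. Qed.

Lemma occurs_nth_self x0 W p : p < size W -> occurs (nth x0 W p) W p.
Proof. by move=> lt_pW; rewrite /occurs lt_pW (set_nth_default x0) ?eqxx. Qed.

Lemma occurs_cat_size c s t : occurs c (s ++ c :: t) (size s).
Proof. by rewrite /occurs nth_cat size_cat ltnn subnn addnS ltnS leq_addr /=. Qed.

Lemma occurs_insert c x W1 W2 :
  occurs c (W1 ++ x :: W2) =1 ins_pred (size W1) (x == c) (occurs c (W1 ++ W2)).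
Proof.
move=> q; rewrite /ins_pred /occurs !nth_cat !size_cat /=.
case: (ltngtP q (size W1)) => [lt_q | gt_q | ->].
- by rewrite !ltn_addr.
- have le_q1 : size W1 <= q.-1 by lia.
  rewrite [q.-1 < size W1]ltnNge le_q1 /=.
  have -> : q - size W1 = (q.-1 - size W1).+1 by lia.
  by congr andb; lia.
- by rewrite subnn /=; lia.
Qed.

Lemma take_occurs c W i j : i < j -> j <= size W -> occurs c W i ->
  exists2 B, take j W = take i W ++ c :: B & size B = j - i.+1.
Proof.
move=> lt_ij le_jW /andP[lt_iW /eqP Wi].
exists (drop i.+1 (take j W)); last by rewrite size_drop size_takel.
have lt_i_take : i < size (take j W) by rewrite size_takel.
rewrite -{1}(cat_take_drop i (take j W)) take_takel ?(ltnW lt_ij) //.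
by rewrite (drop_nth c lt_i_take) nth_take ?Wi.
Qed.

Lemma contains_XYXYXP W : contains_XYXYX W <-> exists c, spaced_triple (occurs c W).
Proof.
split=> [[W1 [W2 [a [b1 [b2 [a_nil b1_nil b2_nil ->]]]]]] | [c [i [j [l [lt_ij lt_jl Wi Wj Wl]]]]]].
  case: a a_nil => [//|c a'] _; set a := c :: a'.
  have occ s t : occurs c (s ++ a ++ t) (size s) by exact: occurs_cat_size.
  have a_pos : 0 < size a by [].
  have b1_pos : 0 < size b1 by case: b1 b1_nil.
  have b2_pos : 0 < size b2 by case: b2 b2_nil.
  exists c, (size W1), (size (W1 ++ a ++ b1)), (size (W1 ++ a ++ b1 ++ a ++ b2)).
  rewrite -!catA; split; try by rewrite !size_cat; lia.
  - exact: occ.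
  - by move: (occ (W1 ++ a ++ b1) (b2 ++ a ++ W2)); rewrite -!catA.
  - by move: (occ (W1 ++ a ++ b1 ++ a ++ b2) W2); rewrite -!catA.
have lt_lW : l < size W by case/andP: Wl.
have take_l1 : take l.+1 W = take l W ++ [:: c].
  by rewrite (take_nth c lt_lW) -cats1 (occurs_nth c Wl).
have [B2 take_l size_B2] := take_occurs (ltnW lt_jl) (ltnW lt_lW) Wj.
have [B1 take_j size_B1] := take_occurs (ltnW lt_ij) (ltnW (ltn_trans (ltnW lt_jl) lt_lW)) Wi.
exists (take i W), (drop l.+1 W), [:: c], B1, B2; split => //.
- by apply/eqP; rewrite -size_eq0 size_B1; lia.
- by apply/eqP; rewrite -size_eq0 size_B2; lia.
by rewrite -{1}(cat_take_drop l.+1 W) take_l1 take_l take_j -!catA.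
Qed.

Lemma count_mem_occurs c W : count_mem c W = count (occurs c W) (iota 0 (size W)).
Proof.
rewrite -{1}(mkseq_nth c W) count_map; apply: eq_in_count => p.
by rewrite mem_iota /occurs /= => ->.
Qed.

Lemma count_mem_occurs_uniq c W s :
  uniq s -> (forall p, occurs c W p = (p \in s)) -> count_mem c W = size s.
Proof.
move=> uniq_s occ_s; rewrite count_mem_occurs (eq_count occ_s) -size_filter.
apply: perm_size; apply: uniq_perm => [|//|p]; first by rewrite filter_uniq ?iota_uniq.
rewrite mem_filter mem_iota /=; apply: andb_idr.
by rewrite -[p \in s]occ_s => /andP[].
Qed.

Lemma occurs_count_mem2 c u : count_mem c u = 2 ->
  exists h1 h2, h1 < h2 /\ forall p, occurs c u p = (p \in [:: h1; h2]).
Proof.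
set pos := filter (occurs c u) (iota 0 (size u)) => count2.
have occ_pos : forall p, occurs c u p = (p \in pos).
  by move=> p; rewrite mem_filter mem_iota; apply/idP/andP => [Wp | []//]; case/andP: (Wp).
have : sorted ltn pos by apply: sorted_filter; [exact: ltn_trans | exact: iota_ltn_sorted].
have : size pos = 2 by rewrite size_filter -count_mem_occurs.
by case: pos occ_pos => [|h1 [|h2 []]] // occ_pos _ /= /andP[lt_h12 _]; exists h1, h2.
Qed.

End Occurrences.

Fixpoint stutter {T : Type} (u : seq T) : seq T :=
  if u is x :: u' then x :: x :: stutter u' else [::].

Section Stutter.

Variable T : Type.
Implicit Types (u : seq T).

Lemma size_stutter u : size (stutter u) = (size u).*2.
Proof. by elim: u => //= x u ->. Qed.

Lemma nth_stutter x0 u p : nth x0 (stutter u) p = nth x0 u p./2.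
Proof. by elim: u p => [|x u IHu] [|[|p]] //=; rewrite ?nth_nil. Qed.

Lemma count_stutter (a : pred T) u : count a (stutter u) = (count a u).*2.
Proof. by elim: u => //= x u ->; rewrite doubleD; case: (a x). Qed.

Lemma stutter_inj : injective (@stutter T).
Proof. by elim=> [|x u IHu] [|y v] //= [-> _ /IHu ->]. Qed.

End Stutter.

Lemma occurs_stutter (T : eqType) (c : T) u p : occurs c (stutter u) p = occurs c u p./2.
Proof. by rewrite /occurs size_stutter nth_stutter; congr andb; lia. Qed.

Section StutteredWords.

Variables (T : eqType) (u : seq T).
Hypothesis count2 : forall c, count_mem c u = 2.

Lemma stutter_avoids : avoids_XYXYX (stutter u).
Proof.
case/contains_XYXYXP=> c; have [h1 [h2 [_ occ_u]]] := occurs_count_mem2 (count2 c).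
apply: (two_pairs_no_spaced_triple (a := h1.*2) (b := h2.*2)) => q.
by rewrite occurs_stutter occ_u !inE; lia.
Qed.

Lemma stutter_ins_pred_spaced_triple c g (b : bool) :
  b \/ (odd g /\ occurs c u g./2) -> spaced_triple (ins_pred g b (occurs c (stutter u))).
Proof.
have [h1 [h2 [lt_h12 occ_u]]] := occurs_count_mem2 (count2 c).
move=> new_or_split; apply: (spaced_triple_ins_pred_pairs (p1 := h1.*2) (p2 := h2.*2));
  rewrite ?occurs_stutter ?occ_u ?inE; try lia.
case: new_or_split => [new | [odd_g]]; first exact: Or31.
by rewrite occ_u !inE => /orP[] /eqP half_g; [apply: Or32 | apply: Or33]; lia.
Qed.

Lemma stutter_extension_contains V : is_extension (stutter u) V -> contains_XYXYX V.
Proof.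
case=> W1 [W2 [x [eqW ->]]]; apply/contains_XYXYXP.
have le_g : size W1 <= (size u).*2 by rewrite -size_stutter eqW size_cat leq_addr.
have [odd_g | even_g] := boolP (odd (size W1)).
  exists (nth x u (size W1)./2); apply: eq_spaced_triple (fsym (occurs_insert _ _ _ _)) _.
  rewrite -eqW; apply: stutter_ins_pred_spaced_triple; right; split=> //.
  by apply: occurs_nth_self; lia.
exists x; apply: eq_spaced_triple (fsym (occurs_insert _ _ _ _)) _.
by rewrite -eqW eqxx; apply: stutter_ins_pred_spaced_triple; left.
Qed.

End StutteredWords.

Section ExtremalWords.

Variables (T : eqType) (W : seq T).
Hypothesis extremal_W : extremal_XYXYX W.

Lemma extremal_insertion c g : g <= size W ->
  spaced_triple (ins_pred g true (occurs c W)) \/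
  exists2 d, d != c & [/\ 0 < g, occurs d W g.-1 & occurs d W g].
Proof.
move=> le_gW; have [avoid_W ext_W] := extremal_W.
have /ext_W /contains_XYXYXP[d] : is_extension W (take g W ++ c :: drop g W).
  by exists (take g W), (drop g W), c; rewrite cat_take_drop.
move/(eq_spaced_triple (occurs_insert _ _ _ _)); rewrite cat_take_drop size_takel //.
have [<- | neq_cd] := eqVneq c d; first by left.
move=> triple_d; right; exists d; first by rewrite eq_sym.
apply: spaced_triple_ins_pred_false triple_d => free_d.
by apply: avoid_W; apply/contains_XYXYXP; exists d.
Qed.

Lemma extremal_occurs c : exists p, occurs c W p.
Proof.
have [triple | [d _ [_ _]]] := extremal_insertion c (leqnn (size W)); last by rewrite /occurs ltnn.
case: triple => i [j [l [lt_ij _ /ins_predP Wi /ins_predP Wj _]]].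
case: Wi => [[_ Wi] | [i_n _] | [_ Wi]]; [by exists i | | by exists i.-1].
by case: Wj => [[_ Wj] | [] | [_ Wj]]; [exists j | lia | exists j.-1].
Qed.

Lemma extremal_two_pairs c :
  exists m M, m.+2 < M /\ forall p, occurs c W p = (p \in [:: m; m.+1; M.-1; M]).
Proof.
have [avoid_W _] := extremal_W.
apply: (extremal_positions (n := size W)) (extremal_occurs c).
- by move=> p /andP[].
- by move=> triple; apply: avoid_W; apply/contains_XYXYXP; exists c.
move=> g le_gW next_to_c; have [// | [d neq_dc [_ Wd1 Wd]]] := extremal_insertion c le_gW.
case/eqP: neq_dc; case: next_to_c => [[_ Wc1] | Wc].
- by rewrite -(occurs_nth c Wd1) (occurs_nth c Wc1).
- by rewrite -(occurs_nth c Wd) (occurs_nth c Wc).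
Qed.

End ExtremalWords.

Section PairedWords.

Variables (T : eqType) (x0 : T) (W : seq T).
Hypothesis W_pairs : forall c, c \in W ->
  exists m M, m.+2 < M /\ forall p, occurs c W p = (p \in [:: m; m.+1; M.-1; M]).

Lemma paired_even_left p m M : p < size W -> ~~ odd p -> m.+2 < M ->
  (forall q, occurs (nth x0 W p) W q = (q \in [:: m; m.+1; M.-1; M])) -> p = m \/ p = M.-1.
Proof.
elim/ltn_ind: p m M => p IH m M lt_pW even_p gap occ.
(* If p ended a pair, the even position p.-2 would start a pair of the same
   letter, i.e. be m or M.-1, which the four positions do not allow. *)
have := occ p; rewrite occurs_nth_self // !inE => /esym p_in.
have [//|right_end] : (p = m \/ p = M.-1) \/ (p = m.+1 \/ p = M) by lia.
suff: p.-2 = m \/ p.-2 = M.-1 by lia.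
have prev : occurs (nth x0 W p) W p.-1 by rewrite occ !inE; lia.
have lt_p2 : p.-2 < p by lia.
have lt_p2W : p.-2 < size W by lia.
have even_p2 : ~~ odd p.-2 by lia.
have same : nth x0 W p.-2 = nth x0 W p.
  have [m' [M' [gap' occ']]] := W_pairs (mem_nth x0 lt_p2W).
  have left' := IH _ lt_p2 m' M' lt_p2W even_p2 gap' occ'.
  have : occurs (nth x0 W p.-2) W p.-1 by rewrite occ' !inE; lia.
  by move/(occurs_nth x0) <-; apply: occurs_nth prev.
by apply: IH => //; rewrite same.
Qed.

Lemma paired_even_succ p : p < size W -> ~~ odd p -> occurs (nth x0 W p) W p.+1.
Proof.
move=> lt_pW even_p; have [m [M [gap occ]]] := W_pairs (mem_nth x0 lt_pW).
by rewrite occ !inE; have := paired_even_left lt_pW even_p gap occ; lia.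
Qed.

End PairedWords.

Lemma even_pairs_stutter (T : eqType) (x0 : T) (W : seq T) :
  (forall p, p < size W -> ~~ odd p -> occurs (nth x0 W p) W p.+1) -> exists u, W = stutter u.
Proof.
have [n] := ubnP (size W); elim: n W => // n IHn [|x [|y W]] /= lt_W pairs.
- by exists [::].
- by have := pairs 0 isT isT.
have lt_Wn : size W < n by lia.
have [u ->] : exists u, W = stutter u.
  apply: (IHn W lt_Wn) => p lt_pW even_p.
  by apply: (pairs p.+2); rewrite //= negbK.
by exists (x :: u); have /andP[_ /eqP /= ->] := pairs 0 isT isT.
Qed.

Lemma extremal_stutter (T : eqType) (W : seq T) :
  extremal_XYXYX W -> exists2 u, (forall c, count_mem c u = 2) & W = stutter u.
Proof.
move=> extremal_W; have two_pairs := extremal_two_pairs extremal_W.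
have [u eqW] : exists u, W = stutter u.
  case: W extremal_W two_pairs => [|x0 W'] extremal_W two_pairs; first by exists [::].
  by apply: (even_pairs_stutter (x0 := x0)) => p; apply: paired_even_succ => c _.
exists u => // c; have [m [M [gap occ]]] := two_pairs c.
have := count_mem_occurs_uniq _ occ; rewrite eqW count_stutter /= !inE; lia.
Qed.

Theorem extremal_XYXYX_stutter (T : eqType) (W : seq T) :
  extremal_XYXYX W <-> exists2 u, (forall c, count_mem c u = 2) & W = stutter u.
Proof.
split=> [|[u count2 ->]]; first exact: extremal_stutter.
by split; [exact: stutter_avoids | exact: stutter_extension_contains].
Qed.

Lemma sum_count_mem_undup (T : eqType) (s : seq T) :
  \sum_(x <- undup s) count_mem x s = size s.
Proof.
rewrite -(perm_size (perm_count_undup s)) size_flatten /shape -map_comp sumnE big_map.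
by apply: eq_bigr => x _; rewrite /= size_nseq.
Qed.

Lemma prod_fact_count_rem (T : finType) (s : seq T) x : x \in s ->
  \prod_(c : T) (count_mem c s)`! = count_mem x s * \prod_(c : T) (count_mem c (rem x s))`!.
Proof.
move=> sx; rewrite (bigD1 x) // [in RHS](bigD1 x) //= count_mem_rem eqxx subn1 mulnA.
have count_pos : 0 < count_mem x s by rewrite -has_count has_pred1.
rewrite -{1}(prednK count_pos) factS prednK //; congr (_ * _); apply: eq_bigr => c neq_cx.
by rewrite count_mem_rem eq_sym (negbTE neq_cx) subn0.
Qed.

Lemma size_permutations_multinomial (T : finType) (s : seq T) :
  size (permutations s) * \prod_(c : T) (count_mem c s)`! = (size s)`!.
Proof.
have [n] := ubnP (size s); elim: n s => // n IHn s lt_s.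
have [-> | s_nil] := eqVneq s [::]; first by rewrite big1.
have s_pos : 0 < size s by rewrite lt0n size_eq0.
rewrite (perm_size (permutationsE s_pos)) size_allpairs_dep sumnE big_map.
have -> : (size s)`! = (\sum_(x <- undup s) count_mem x s) * (size s).-1`!.
  by rewrite sum_count_mem_undup -[in LHS](prednK s_pos) factS prednK.
rewrite !big_distrl /=; apply: eq_big_seq => x; rewrite mem_undup => sx.
have lt_rem : size (rem x s) < n by rewrite size_rem // -ltnS prednK.
by rewrite (prod_fact_count_rem sx) mulnCA IHn // size_rem.
Qed.

Lemma count_mem_enum_twice (T : finType) (c : T) : count_mem c (enum T ++ enum T) = 2.
Proof. by rewrite count_cat count_uniq_mem ?enum_uniq ?mem_enum. Qed.

Lemma perm_enum_twiceP (T : finType) (u : seq T) :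
  perm_eq u (enum T ++ enum T) <-> forall c, count_mem c u = 2.
Proof.
split=> [/permP eq_u c | count2]; first by rewrite eq_u count_mem_enum_twice.
by apply/allP => c _; rewrite /= count2 count_mem_enum_twice.
Qed.

Theorem mainTheorem4 (k : nat) (A : finType) :
  0 < k -> #|A| = k ->
  exists s : seq (seq A),
    [/\ uniq s,
        (forall W : seq A, W \in s <-> extremal_XYXYX W) &
        size s = (k.*2)`! %/ 2 ^ k].
Proof.
move=> _ cardA; exists (map stutter (permutations (enum A ++ enum A))); split.
- by rewrite map_inj_uniq ?permutations_uniq //; exact: stutter_inj.
- move=> W; rewrite extremal_XYXYX_stutter; split.
    by case/mapP=> u; rewrite mem_permutations => /perm_enum_twiceP count2 ->; exists u.
  by case=> u /perm_enum_twiceP count2 ->; apply: map_f; rewrite mem_permutations.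
have := size_permutations_multinomial (enum A ++ enum A).
rewrite (eq_bigr (fun _ => 2)) => [|c _]; last by rewrite count_mem_enum_twice.
rewrite prod_nat_const size_cat -cardE cardA addnn size_map => <-.
by rewrite mulnK // expn_gt0.
Qed.
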